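(* Let $S=\{\rho_1=0<\rho_2<\cdots\}$ be an Arf numerical semigroup. Then for every positive integer $i$, $\beta(2\rho_i)=i$ and consequently $\#A[2\rho_i]=2i-1$.
   Context: A numerical semigroup is a submonoid $S$ of $(\mathbb{N}_0,+)$ with finite complement, with elements listed increasingly $\rho_1=0<\rho_2<\cdots$. $S$ is Arf if $\rho_i+\rho_j-\rho_k\in S$ for all positive integers $i\ge j\ge k$. For $\rho\in S$, $A[\rho]=\{p\in S:\ \rho-p\in S\}$ and $\beta(\rho)=\max\{j\ge1:\ \rho_1,\dots,\rho_j\in A[\rho]\ \text{and}\ 2\rho_j\le\rho\}$. *)

From mathcomp Require Import all_boot.
Set Implicit Arguments. Unset Strict Implicit. Unset Printing Implicit Defensive.

Definition numerical_semigroup (S : pred nat) : Prop :=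
  S 0 /\ (forall a b, S a -> S b -> S (a + b)) /\
  exists N, forall n, N <= n -> S n.

(* rho enumerates S increasingly, with paper's 1-based indexing:
   rho 1 = 0 < rho 2 < ... and {rho i | i >= 1} = S. *)
Definition enumerates (S : pred nat) (rho : nat -> nat) : Prop :=
  (forall i j, 1 <= i -> i < j -> rho i < rho j) /\
  (forall x, S x <-> exists2 i, 1 <= i & rho i = x).

Definition Arf (S : pred nat) (rho : nat -> nat) : Prop :=
  forall i j k, 1 <= k -> k <= j -> j <= i -> S (rho i + rho j - rho k).

Definition inA (S : pred nat) (r p : nat) : bool := [&& p <= r, S p & S (r - p)].

Definition Aset (S : pred nat) (r : nat) : {set 'I_r.+1} :=
  [set p : 'I_r.+1 | inA S r p].

Definition beta_cond (S : pred nat) (rho : nat -> nat) (r j : nat) : Prop :=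
  1 <= j /\ (forall k, 1 <= k -> k <= j -> inA S r (rho k)) /\ 2 * rho j <= r.

Definition beta_is (S : pred nat) (rho : nat -> nat) (r b : nat) : Prop :=
  beta_cond S rho r b /\ forall j, beta_cond S rho r j -> j <= b.

(** The Arf condition with [k <= j = i] says that [2 rho_i - rho_k] lies in [S] for
    every [k <= i], so [rho_1, ..., rho_i] all lie in [A[2 rho_i]], which gives
    [beta(2 rho_i) = i].  Moreover [A[2 rho_i]] is symmetric about [rho_i]: its
    elements up to [rho_i] are exactly [rho_1, ..., rho_i], and those above [rho_i]
    are their reflections [2 rho_i - rho_k] for [k < i].  Counting both halves
    gives [i + (i - 1)] elements. *)
From mathcomp Require Import all_boot.
From mathcomp Require Import zify.

Lemma card_ord_pred_uniq n (P : pred nat) (s : seq nat) :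
  uniq s -> (forall p, p \in s -> p < n) -> (forall p, p < n -> P p = (p \in s)) ->
  #|[set p : 'I_n | P p]| = size s.
Proof.
move=> uniq_s s_lt_n P_mem.
have -> : #|[set p : 'I_n | P p]| = count P (iota 0 n).
  rewrite cardsE cardE /enum_mem -enumT size_filter -val_enum_ord count_map.
  by apply: eq_count => p; rewrite !inE.
rewrite (@eq_in_count _ _ (mem s)) => [|p]; last by rewrite mem_iota => /andP[_ /P_mem].
rewrite -size_filter; apply/perm_size/uniq_perm => [||p].
- exact/filter_uniq/iota_uniq.
- exact: uniq_s.
- by rewrite mem_filter mem_iota /=; case: (boolP (p \in s)) => // /s_lt_n.
Qed.

Section Enumeration.

Variables (S : pred nat) (rho : nat -> nat).
Hypothesis rhoS : enumerates S rho.

Lemma leq_rho {a b} : 0 < a -> 0 < b -> (rho a <= rho b) = (a <= b).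
Proof.
have [mono _] := rhoS; move=> a_gt0 b_gt0.
case: (ltngtP a b) => [ab|ba|->]; last by rewrite leqnn.
- exact/ltnW/mono.
- by apply/negbTE; rewrite -ltnNge; apply: mono.
Qed.

Lemma ltn_rho {a b} : 0 < a -> 0 < b -> (rho a < rho b) = (a < b).
Proof. by move=> a_gt0 b_gt0; rewrite !ltnNge leq_rho. Qed.

Lemma rho_inj {a b} : 0 < a -> 0 < b -> rho a = rho b -> a = b.
Proof.
move=> a_gt0 b_gt0 eq_ab; apply/eqP.
by rewrite eqn_leq -(leq_rho a_gt0 b_gt0) -(leq_rho b_gt0 a_gt0) eq_ab leqnn.
Qed.

Lemma S_rho k : 0 < k -> S (rho k).
Proof. by move=> k_gt0; apply/rhoS.2; exists k. Qed.

Lemma S_rho_index {p} : S p -> exists2 k, 0 < k & rho k = p.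
Proof. exact: (rhoS.2 p).1. Qed.

Section Double.

Hypothesis arfS : Arf S rho.
Variable i : nat.
Hypothesis i_gt0 : 0 < i.

Let r := 2 * rho i.

Definition A_lower : seq nat := map rho (iota 1 i).
Definition A_upper : seq nat := [seq r - rho k | k <- iota 1 i.-1].

Lemma S_reflect k : 0 < k -> k <= i -> S (r - rho k).
Proof. by move=> k_gt0 le_ki; rewrite /r mul2n -addnn; apply: arfS. Qed.

Lemma inA_rho k : 0 < k -> k <= i -> inA S r (rho k).
Proof.
move=> k_gt0 le_ki; apply/and3P; split; [|exact: S_rho|exact: S_reflect].
by have := leq_rho k_gt0 i_gt0; rewrite /r le_ki; lia.
Qed.

Lemma beta_is_double : beta_is S rho r i.
Proof.
split; first by split=> //; split=> [k|]; [exact: inA_rho | rewrite leqnn].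
by move=> j [j_gt0 [_ le_2rhoj_r]]; rewrite -(leq_rho j_gt0 i_gt0); lia.
Qed.

Lemma mem_A_inA p : p \in A_lower ++ A_upper -> inA S r p.
Proof.
rewrite mem_cat => /orP[] /mapP[k]; rewrite mem_iota => /andP[k_gt0 lt_k] ->.
  by apply: inA_rho; lia.
have le_rho_ki : rho k <= rho i by rewrite leq_rho //; lia.
apply/and3P; split; [lia | apply: S_reflect; lia |].
by rewrite (_ : r - (r - rho k) = rho k); [exact: S_rho | rewrite /r; lia].
Qed.

Lemma inA_mem_A p : inA S r p -> p \in A_lower ++ A_upper.
Proof.
case/and3P=> le_pr Sp Srp; rewrite mem_cat; case: (leqP p (rho i)) => [le_p_rhoi|lt_rhoi_p].
  have [k k_gt0 rho_k] := S_rho_index Sp.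
  move: le_p_rhoi; rewrite -rho_k leq_rho // => le_ki.
  by apply/orP; left; apply/mapP; exists k; rewrite // mem_iota; lia.
have [k k_gt0 rho_k] := S_rho_index Srp.
have : rho k < rho i by rewrite rho_k /r; lia.
rewrite ltn_rho // => lt_ki; apply/orP; right; apply/mapP; exists k.
  by rewrite mem_iota; lia.
by rewrite /r; lia.
Qed.

Lemma uniq_A : uniq (A_lower ++ A_upper).
Proof.
have rho_le k : k \in iota 1 i -> rho k <= rho i.
  by rewrite mem_iota => /andP[k_gt0 lt_k]; rewrite leq_rho //; lia.
have rho_lt k : k \in iota 1 i.-1 -> rho k < rho i.
  by rewrite mem_iota => /andP[k_gt0 lt_k]; rewrite ltn_rho //; lia.
have upper_le k : k \in iota 1 i.-1 -> k \in iota 1 i by rewrite !mem_iota; lia.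
have rho_inj_in : {in iota 1 i &, injective rho}.
  by move=> a b; rewrite !mem_iota => /andP[a_gt0 _] /andP[b_gt0 _]; apply: rho_inj.
rewrite cat_uniq; apply/and3P; split.
- by rewrite map_inj_in_uniq ?iota_uniq.
- apply/hasPn => _ /mapP[k /rho_lt lt_k ->].
  by apply/mapP=> [[m /rho_le le_m]]; rewrite /r; lia.
- rewrite map_inj_in_uniq ?iota_uniq // => a b a_in b_in eq_ab.
  apply: rho_inj_in (upper_le _ a_in) (upper_le _ b_in) _.
  by move: (rho_le _ (upper_le _ a_in)) (rho_le _ (upper_le _ b_in)) eq_ab; rewrite /r; lia.
Qed.

Lemma card_Aset_double : #|Aset S r| = 2 * i - 1.
Proof.
rewrite /Aset (card_ord_pred_uniq _ _ _ uniq_A).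
- by rewrite size_cat !size_map !size_iota; lia.
- by move=> p /mem_A_inA /and3P[].
- by move=> p _; apply/idP/idP => [/inA_mem_A|/mem_A_inA].
Qed.

End Double.

End Enumeration.

Theorem mainTheorem5 (S : pred nat) (rho : nat -> nat) :
  numerical_semigroup S -> enumerates S rho -> Arf S rho ->
  forall i, 1 <= i ->
    beta_is S rho (2 * rho i) i /\ #|Aset S (2 * rho i)| = 2 * i - 1.
Proof.
move=> _ rhoS arfS i i_gt0.
by split; [exact: beta_is_double | exact: card_Aset_double].
Qed.
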